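(* Let $C,w,n_{\max}>0$ and $\epsilon\in(0,10^{-3})$. There is $R_2>0$ depending on $C,w,n_{\max}$ such that if $I$ is an interval of length $R\ge R_2$ the following holds. Suppose $\mathcal{P}=\{J_1,\dots,J_{n_0},J^{(1)}_1,\dots,J^{(1)}_{n_1},\dots,J^{(m)}_1,\dots,J^{(m)}_{n_m}\}$ is a partition of $I$ into intervals with disjoint interiors, with $n_i\le n_{\max}$ for all $i\ge1$, and let $\mathcal{P}_b=\{J^{(p)}_i:1\le p\le m,1\le i\le n_p\}$. Suppose (1) $\sum_{J\in\mathcal{P}_b}l(J)\ge(1-\epsilon)R$; and (2) for any $J^{(p)}_i,J^{(q)}_j\in\mathcal{P}_b$ with $p\ne q$, $$d(J^{(p)}_i,J^{(q)}_j)\ge\max\Big(R_2,\;C\min\big(l(J^{(p)}_i),l(J^{(q)}_j)\big)^{1+w}\Big).$$ Then there exists $J^{(j_0)}_{i_0}\in\mathcal{P}_b$ with $l(J^{(j_0)}_{i_0})\ge\frac{1}{32n_{\max}}R$ and $\sum_{i=1}^{n_{j_0}}l(J^{(j_0)}_i)\ge\frac34R$.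
   Context: $l(J)$ is the length of the interval $J$, and $d(J,J')$ is the distance between two disjoint intervals (the infimum of $|s-t|$, $s\in J$, $t\in J'$). *)

From Stdlib Require Import Reals.
Open Scope R_scope.

(* A (compact) interval [a,b] of the real line, represented by its endpoints
   (fst = left endpoint a, snd = right endpoint b), with a <= b required
   separately where used. *)
Definition interval := (R * R)%type.

Definition wf_interval (J : interval) : Prop := fst J <= snd J.

Definition len (J : interval) : R := snd J - fst J.

Definition mem (x : R) (J : interval) : Prop := fst J <= x <= snd J.

Definition mem_int (x : R) (J : interval) : Prop := fst J < x < snd J.

(* d(J,J') = inf { |s - t| : s in J, t in J' } for J, J' nonempty compact
   intervals; written out explicitly. *)
Definition idist (J J' : interval) : R :=
  Rmax 0 (Rmax (fst J' - snd J) (fst J - snd J')).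

Fixpoint sumR (n : nat) (f : nat -> R) : R :=
  match n with
  | O => 0
  | S k => sumR k f + f k
  end.

(* Indices of the members of the partition P:
   Free i  stands for J_{i+1}          (0 <= i < n0),
   Bad p i stands for J^{(p+1)}_{i+1}  (0 <= p < m, 0 <= i < n_{p+1}). *)
Inductive pidx : Type :=
| Free (i : nat)
| Bad (p i : nat).

Definition valid_idx (n0 m : nat) (n : nat -> nat) (k : pidx) : Prop :=
  match k with
  | Free i => (i < n0)%nat
  | Bad p i => (p < m)%nat /\ (i < n p)%nat
  end.

Definition get (J0 : nat -> interval) (Jb : nat -> nat -> interval)
  (k : pidx) : interval :=
  match k with
  | Free i => J0 i
  | Bad p i => Jb p i
  end.

Definition is_partition (I : interval) (n0 m : nat) (n : nat -> nat)
  (J0 : nat -> interval) (Jb : nat -> nat -> interval) : Prop :=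
  (forall k, valid_idx n0 m n k -> wf_interval (get J0 Jb k)) /\
  (forall x, mem x I <->
     exists k, valid_idx n0 m n k /\ mem x (get J0 Jb k)) /\
  (forall k k', valid_idx n0 m n k -> valid_idx n0 m n k' -> k <> k' ->
     forall x, ~ (mem_int x (get J0 Jb k) /\ mem_int x (get J0 Jb k'))).

(* x^y for x >= 0, y > 0, with the convention 0^y = 0 (Stdlib's Rpower
   would give Rpower 0 y = 1). *)
Definition rpow (x y : R) : R :=
  match Rle_dec x 0 with
  | left _ => 0
  | right _ => Rpower x y
  end.

From Stdlib Require Import Reals Lra Lia List Wf_nat.
Import ListNotations.
Open Scope R_scope.

(* Keep in each group its longest interval, and let A be the group whose
   longest interval is longest overall.  The representatives of the other
   groups lie in I and are R2-separated, so there are at most R/R2 of them;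
   those longer than t are, together with the one of A, C t^(1+w)-separated,
   so there are at most R / (C t^(1+w)) of them.  Summing over the dyadic
   thresholds t = t0 2^j bounds the total length of the other representatives
   by t0 R/R2 + O(R / (C t0^w)); for suitable t0 and R2 the other groups thus
   carry at most R/5, so group A carries at least (4/5 - eps) R >= 3R/4, and
   its longest interval at least 3R/(4 nmax). *)

Fixpoint lsum (f : nat -> R) (l : list nat) : R :=
  match l with
  | [] => 0
  | x :: l' => f x + lsum f l'
  end.

Lemma lsum_app f l1 l2 : lsum f (l1 ++ l2) = lsum f l1 + lsum f l2.
Proof. induction l1; simpl; lra. Qed.

Lemma lsum_le f g l : (forall x, In x l -> f x <= g x) -> lsum f l <= lsum g l.
Proof.
  induction l as [|x l IH]; simpl; intros Hfg; [lra|].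
  assert (f x <= g x) by auto.
  assert (lsum f l <= lsum g l) by (apply IH; auto).
  lra.
Qed.

Lemma lsum_plus f g l : lsum (fun x => f x + g x) l = lsum f l + lsum g l.
Proof. induction l; simpl; lra. Qed.

Lemma lsum_scal c f l : lsum (fun x => c * f x) l = c * lsum f l.
Proof. induction l; simpl; [ring | rewrite IHl; ring]. Qed.

Lemma lsum_const c l : lsum (fun _ => c) l = c * INR (length l).
Proof. induction l; cbn [lsum length]; [simpl; ring | rewrite S_INR; lra]. Qed.

Lemma lsum_indicator (g : nat -> bool) c l :
  lsum (fun x => if g x then c else 0) l = c * INR (length (filter g l)).
Proof.
  induction l as [|x l IH]; cbn [lsum filter]; [simpl; ring|].
  destruct (g x); cbn [length]; [rewrite S_INR|]; lra.
Qed.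

Lemma lsum_filter_support (g : nat -> bool) f l :
  (forall x, In x l -> g x = false -> f x = 0) -> lsum f (filter g l) = lsum f l.
Proof.
  induction l as [|x l IH]; simpl; intros Hf; [reflexivity|].
  destruct (g x) eqn:Hg; simpl; rewrite IH by auto; [reflexivity|].
  rewrite (Hf x) by auto. ring.
Qed.

Lemma lsum_split_at f l a : NoDup l -> In a l ->
  lsum f l = f a + lsum f (filter (fun x => negb (Nat.eqb x a)) l).
Proof.
  induction l as [|x l IH]; simpl; intros Hnd Ha; [contradiction|].
  inversion Hnd as [|? ? Hx Hnd']; subst.
  destruct Ha as [<- | Ha].
  - rewrite Nat.eqb_refl. simpl. rewrite lsum_filter_support; [reflexivity|].
    intros y Hy Hneq. destruct (Nat.eqb_spec y x); [subst; contradiction | discriminate].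
  - destruct (Nat.eqb_spec x a) as [<- | Hxa]; [contradiction|].
    simpl. rewrite (IH Hnd' Ha). ring.
Qed.

Lemma sumR_lsum m f : sumR m f = lsum f (seq 0 m).
Proof.
  induction m as [|m IH]; [reflexivity|].
  rewrite seq_S, lsum_app, <- IH. simpl. ring.
Qed.

Lemma sumR_le J f g :
  (forall j, (j < J)%nat -> f j <= g j) -> sumR J f <= sumR J g.
Proof.
  intros Hfg. rewrite !sumR_lsum. apply lsum_le.
  intros j Hj. apply in_seq in Hj. apply Hfg. lia.
Qed.

Lemma sumR_scal c J f : sumR J (fun j => c * f j) = c * sumR J f.
Proof. rewrite !sumR_lsum. apply lsum_scal. Qed.

Lemma sumR_le_const J f M :
  (forall j, (j < J)%nat -> f j <= M) -> sumR J f <= INR J * M.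
Proof.
  intros Hf. apply Rle_trans with (sumR J (fun _ => M)); [apply sumR_le; exact Hf|].
  rewrite sumR_lsum, lsum_const, length_seq. lra.
Qed.

Lemma lsum_sumR J h l :
  lsum (fun x => sumR J (h x)) l = sumR J (fun j => lsum (fun x => h x j) l).
Proof.
  induction J as [|J IH]; simpl.
  - rewrite lsum_const. ring.
  - rewrite lsum_plus, IH. reflexivity.
Qed.

Lemma geom_partial_sum_le r J : 0 <= r < 1 -> sumR J (fun j => r ^ j) <= / (1 - r).
Proof.
  intros Hr.
  assert (Hclosed : sumR J (fun j => r ^ j) * (1 - r) = 1 - r ^ J).
  { induction J as [|J IH]; simpl; [ring|]. rewrite Rmult_plus_distr_r, IH. ring. }
  assert (0 <= r ^ J) by (apply pow_le; lra).
  apply (Rmult_le_reg_r (1 - r)); [lra|].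
  rewrite Hclosed, Rinv_l by lra. lra.
Qed.

Definition argmax (f : nat -> R) (l : list nat) : nat :=
  match l with
  | [] => 0%nat
  | x :: l' => fold_right (fun y best => if Rle_dec (f y) (f best) then best else y) x l'
  end.

Lemma argmax_spec f l : l <> [] ->
  In (argmax f l) l /\ forall y, In y l -> f y <= f (argmax f l).
Proof.
  destruct l as [|x l]; [congruence|]. intros _. simpl.
  induction l as [|y l [Hin Hmax]]; simpl.
  - split; [auto|]. intros y [<- | []]. lra.
  - set (best := fold_right _ x l) in *.
    assert (Hx : f x <= f best) by (apply Hmax; left; reflexivity).
    assert (Hl : forall z, In z l -> f z <= f best) by (intros z Hz; apply Hmax; right; exact Hz).
    destruct Rle_dec as [Hle | Hlt].
    + split; [simpl in Hin; tauto|].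
      intros z [<- | [<- | Hz]]; auto.
    + split; [simpl; auto|].
      intros z [<- | [<- | Hz]]; [lra | lra |]. specialize (Hl z Hz). lra.
Qed.

Definition Rltb (x y : R) : bool := if Rlt_dec x y then true else false.

Lemma Rltb_spec x y : Rltb x y = true <-> x < y.
Proof. unfold Rltb. destruct Rlt_dec; split; congruence || tauto. Qed.

Definition sub_interval (J I : interval) : Prop :=
  fst I <= fst J /\ fst J <= snd J /\ snd J <= snd I.

Lemma idist_ge_cases J J' D : 0 < D -> idist J J' >= D ->
  snd J + D <= fst J' \/ snd J' + D <= fst J.
Proof. unfold idist, Rmax. intros HD. repeat destruct Rle_dec; lra. Qed.

(* Split the family around its first member: those lying to its left and
   those lying to its right each sit in an interval shortened by the gap D. *)
Lemma separated_packing (F : nat -> interval) (D : R) :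
  0 < D -> forall (l : list nat) (a b : R), a <= b + D -> NoDup l ->
  (forall p, In p l -> sub_interval (F p) (a, b)) ->
  (forall p q, In p l -> In q l -> p <> q -> idist (F p) (F q) >= D) ->
  D * INR (length l) <= b - a + D.
Proof.
  intros HD l. remember (length l) as k eqn:Hk. revert l Hk.
  induction k as [k IH] using lt_wf_ind.
  intros [|p l] Hk a b Hab Hnd Hin Hsep; subst k; [simpl; rewrite Rmult_0_r; lra|].
  inversion Hnd as [|? ? Hp Hnd']; subst.
  destruct (Hin p (or_introl eq_refl)) as (Ha & Hpw & Hb); simpl in Ha, Hb.
  assert (Hsub : forall g a' b', a' <= b' + D ->
            (forall q, In q l -> g q = true -> sub_interval (F q) (a', b')) ->
            D * INR (length (filter g l)) <= b' - a' + D).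
  { intros g a' b' Hab' Hin'.
    refine (IH _ _ (filter g l) eq_refl a' b' Hab' (NoDup_filter _ Hnd') _ _).
    - pose proof (filter_length_le g l). simpl. lia.
    - intros q Hq. apply filter_In in Hq as [Hq Hg]. auto.
    - intros q q' Hq Hq' Hne.
      apply filter_In in Hq as [Hq _]. apply filter_In in Hq' as [Hq' _].
      apply Hsep; simpl; auto. }
  assert (Hside : forall q, In q l -> sub_interval (F q) (a, b) /\
            (snd (F q) + D <= fst (F p) \/ snd (F p) + D <= fst (F q))).
  { intros q Hq. split; [apply Hin; simpl; auto|].
    apply idist_ge_cases; [exact HD|].
    apply Hsep; simpl; auto. intros ->. contradiction. }
  set (on_left := fun q => Rltb (snd (F q)) (fst (F p))).
  assert (Hleft : D * INR (length (filter on_left l)) <= fst (F p) - a).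
  { enough (D * INR (length (filter on_left l)) <= (fst (F p) - D) - a + D) by lra.
    apply Hsub; [lra|]. intros q Hq Hg. apply Rltb_spec in Hg.
    destruct (Hside q Hq) as [(Hqa & Hqw & Hqb) Hgap].
    unfold sub_interval; simpl in *. lra. }
  assert (Hright : D * INR (length (filter (fun q => negb (on_left q)) l)) <= b - snd (F p)).
  { enough (D * INR (length (filter (fun q => negb (on_left q)) l))
              <= b - (snd (F p) + D) + D) by lra.
    apply Hsub; [lra|]. intros q Hq Hg.
    assert (~ snd (F q) < fst (F p))
      by (rewrite <- Rltb_spec; fold (on_left q); destruct (on_left q); easy).
    destruct (Hside q Hq) as [(Hqa & Hqw & Hqb) Hgap].
    unfold sub_interval; simpl in *. lra. }
  pose proof (filter_length on_left l) as Hlen.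
  cbn [length]. rewrite S_INR, <- Hlen, plus_INR. lra.
Qed.

Lemma min_le_dyadic_layers t0 x J :
  Rmin x (t0 * 2 ^ J) <=
    t0 + sumR J (fun j => if Rltb (t0 * 2 ^ j) x then t0 * 2 ^ j else 0).
Proof.
  induction J as [|J IH]; cbn [sumR].
  - simpl. rewrite Rmult_1_r, Rplus_0_r. apply Rmin_r.
  - unfold Rltb at 2. destruct Rlt_dec as [Hlt | Hge].
    + rewrite Rmin_right in IH by lra.
      pose proof (Rmin_r x (t0 * 2 ^ S J)). simpl pow in *. lra.
    + rewrite Rmin_left in IH by lra.
      pose proof (Rmin_l x (t0 * 2 ^ S J)). lra.
Qed.

Lemma dyadic_cover t0 x : 0 < t0 -> exists J, x <= t0 * 2 ^ J.
Proof.
  intros Ht0.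
  destruct (Pow_x_infinity 2 ltac:(rewrite Rabs_pos_eq; lra) (x / t0)) as [J HJ].
  exists J. specialize (HJ J (Nat.le_refl J)).
  rewrite Rabs_pos_eq in HJ by (apply pow_le; lra).
  apply Rge_le in HJ. apply (Rmult_le_compat_l t0) in HJ; [|lra].
  unfold Rdiv in HJ. rewrite <- Rmult_assoc, Rinv_r_simpl_m in HJ; lra.
Qed.

Lemma Rpower_mult_pow2 t0 w j : 0 < t0 ->
  Rpower (t0 * 2 ^ j) w = Rpower t0 w * Rpower 2 w ^ j.
Proof.
  intros Ht0.
  rewrite <- Rpower_mult_distr by (try apply pow_lt; lra).
  f_equal.
  rewrite <- (Rpower_pow j 2), <- (Rpower_pow j (Rpower 2 w)), !Rpower_mult
    by (try apply exp_pos; lra).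
  f_equal. ring.
Qed.

Lemma rpow_1_plus_ge t x w : 0 < t -> t < x -> 0 <= w ->
  t * Rpower t w <= rpow x (1 + w).
Proof.
  intros Ht Htx Hw. unfold rpow. destruct Rle_dec; [lra|].
  rewrite Rpower_plus, Rpower_1 by lra.
  apply Rmult_le_compat; [lra | left; apply exp_pos | lra |].
  apply Rle_Rpower_l; lra.
Qed.

Section DominatedFamily.

Variables (F : nat -> interval) (A : nat) (L : list nat) (a R C w R2 : R).

Hypothesis HC : 0 < C.
Hypothesis Hw : 0 < w.
Hypothesis HR2 : 0 < R2.
Hypothesis HL : NoDup L.
Hypothesis HAL : ~ In A L.
Hypothesis Hin : forall p, In p (A :: L) -> sub_interval (F p) (a, a + R).
Hypothesis Hdom : forall q, In q L -> len (F q) <= len (F A).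
Hypothesis Hsep : forall p q, In p (A :: L) -> In q (A :: L) -> p <> q ->
  idist (F p) (F q) >= Rmax R2 (C * rpow (Rmin (len (F p)) (len (F q))) (1 + w)).

Lemma dominated_family_R_nonneg : 0 <= R.
Proof. destruct (Hin A (or_introl eq_refl)) as (? & ? & ?). simpl in *. lra. Qed.

Lemma dominated_family_count : R2 * INR (length L) <= R.
Proof.
  pose proof dominated_family_R_nonneg.
  assert (Hpack : R2 * INR (length (A :: L)) <= a + R - a + R2).
  { apply (separated_packing F); auto; [lra | constructor; auto |].
    intros p q Hp Hq Hpq. specialize (Hsep p q Hp Hq Hpq).
    pose proof (Rmax_l R2 (C * rpow (Rmin (len (F p)) (len (F q))) (1 + w))). lra. }
  cbn [length] in Hpack. rewrite S_INR in Hpack. lra.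
Qed.

(* The members of L longer than t, together with A, are pairwise
   C t^(1+w) apart, which limits their number. *)
Lemma dominated_family_threshold_mass t : 0 < t ->
  lsum (fun q => if Rltb t (len (F q)) then t else 0) L <= R / (C * Rpower t w).
Proof.
  intros Ht. pose proof dominated_family_R_nonneg.
  assert (HP : 0 < C * Rpower t w) by (apply Rmult_lt_0_compat; [lra | apply exp_pos]).
  rewrite lsum_indicator.
  assert (Hlong : forall q, In q (filter (fun q => Rltb t (len (F q))) L) ->
                    In q L /\ t < len (F q)).
  { intros q Hq. apply filter_In in Hq as [Hq Hg]. apply Rltb_spec in Hg. auto. }
  destruct (filter _ L) as [|q0 Lt] eqn:HLt.
  { simpl. rewrite Rmult_0_r. apply Rle_mult_inv_pos; lra. }
  assert (HA : t < len (F A)).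
  { destruct (Hlong q0 (or_introl eq_refl)) as [Hq0 Ht0].
    specialize (Hdom q0 Hq0). lra. }
  assert (Hsub : forall p, In p (A :: q0 :: Lt) -> In p (A :: L) /\ t < len (F p)).
  { intros p [<- | Hp]; [split; [left; reflexivity | exact HA]|].
    destruct (Hlong p Hp). split; [right|]; auto. }
  set (D := C * (t * Rpower t w)).
  assert (HD : 0 < D) by (unfold D; rewrite <- Rmult_assoc, (Rmult_comm C); nra).
  assert (Hpack : D * INR (length (A :: q0 :: Lt)) <= a + R - a + D).
  { apply (separated_packing F); [exact HD | lra | | |].
    - constructor.
      + intros Hin'. destruct (Hlong A Hin'). contradiction.
      + rewrite <- HLt. apply NoDup_filter, HL.
    - intros p Hp. apply Hin, Hsub, Hp.
    - intros p q Hp Hq Hpq.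
      destruct (Hsub p Hp) as [Hp' Htp]. destruct (Hsub q Hq) as [Hq' Htq].
      specialize (Hsep p q Hp' Hq' Hpq).
      pose proof (Rmax_r R2 (C * rpow (Rmin (len (F p)) (len (F q))) (1 + w))).
      assert (t * Rpower t w <= rpow (Rmin (len (F p)) (len (F q))) (1 + w))
        by (apply rpow_1_plus_ge; [exact Ht | apply Rmin_glb_lt; assumption | lra]).
      unfold D. nra. }
  cbn [length] in Hpack |- *. rewrite S_INR, Rmult_plus_distr_l in Hpack.
  apply (Rmult_le_reg_l (C * Rpower t w)); [exact HP|].
  replace (C * Rpower t w * (R / (C * Rpower t w))) with R
    by (field; split; [apply Rgt_not_eq, exp_pos | lra]).
  replace (C * Rpower t w * (t * INR (S (length Lt)))) with (D * INR (S (length Lt)))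
    by (unfold D; ring).
  lra.
Qed.

(* Dyadic layer cake: a length in (t0 2^j, t0 2^(j+1)] is charged to the
   thresholds t0 2^i, i <= j, and each threshold level is controlled by the
   mass bound above; the resulting series is geometric with ratio 2^-w. *)
Lemma dominated_family_len_sum t0 : 0 < t0 ->
  lsum (fun q => len (F q)) L <=
    t0 * (R / R2) + R / (C * Rpower t0 w) * / (1 - / Rpower 2 w).
Proof.
  intros Ht0.
  set (s := Rpower 2 w).
  assert (Hs : 1 < s).
  { unfold s. rewrite <- (Rpower_O 2) by lra. apply Rpower_lt; lra. }
  assert (HX : 0 < C * Rpower t0 w) by (apply Rmult_lt_0_compat; [lra | apply exp_pos]).
  destruct (dyadic_cover t0 R Ht0) as [J HJ].
  set (layer := fun j q => if Rltb (t0 * 2 ^ j) (len (F q)) then t0 * 2 ^ j else 0).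
  assert (Hlayers : lsum (fun q => len (F q)) L <=
                    lsum (fun q => t0 + sumR J (fun j => layer j q)) L).
  { apply lsum_le. intros q Hq.
    destruct (Hin q (or_intror Hq)) as (Hqa & Hqw & Hqb). simpl in *.
    rewrite <- (Rmin_left (len (F q)) (t0 * 2 ^ J)) by (unfold len; lra).
    apply min_le_dyadic_layers. }
  rewrite lsum_plus, lsum_const, lsum_sumR in Hlayers.
  assert (Hcount : t0 * INR (length L) <= t0 * (R / R2)).
  { apply Rmult_le_compat_l; [lra|].
    apply (Rmult_le_reg_l R2); [exact HR2|].
    replace (R2 * (R / R2)) with R by (field; lra).
    apply dominated_family_count. }
  assert (Hlevels : sumR J (fun j => lsum (fun q => layer j q) L) <=
                    R / (C * Rpower t0 w) * / (1 - / s)).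
  { apply Rle_trans with (sumR J (fun j => R / (C * Rpower t0 w) * (/ s) ^ j)).
    - apply sumR_le. intros j _.
      assert (Hj : 0 < t0 * 2 ^ j) by (apply Rmult_lt_0_compat; [lra | apply pow_lt; lra]).
      eapply Rle_trans; [apply (dominated_family_threshold_mass _ Hj)|].
      right. rewrite Rpower_mult_pow2, pow_inv by lra. fold s.
      field. split; [apply pow_nonzero; lra | split; [apply Rgt_not_eq, exp_pos | lra]].
    - rewrite sumR_scal. apply Rmult_le_compat_l.
      + apply Rle_mult_inv_pos; [pose proof dominated_family_R_nonneg |]; lra.
      + apply geom_partial_sum_le. split.
        * left. apply Rinv_0_lt_compat. lra.
        * rewrite <- Rinv_1. apply Rinv_lt_contravar; lra. }
  lra.
Qed.

End DominatedFamily.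

Lemma partition_member_inside I n0 m n J0 Jb k :
  is_partition I n0 m n J0 Jb -> valid_idx n0 m n k -> sub_interval (get J0 Jb k) I.
Proof.
  intros [Hwf [Hcov _]] Hk.
  specialize (Hwf k Hk). unfold wf_interval in Hwf.
  assert (Hl : mem (fst (get J0 Jb k)) I)
    by (apply Hcov; exists k; split; [|unfold mem]; auto with real).
  assert (Hr : mem (snd (get J0 Jb k)) I)
    by (apply Hcov; exists k; split; [|unfold mem]; auto with real).
  unfold mem in Hl, Hr. unfold sub_interval. lra.
Qed.

Section Groups.

Variables (m : nat) (n : nat -> nat) (Jb : nat -> nat -> interval).

Definition group_len (p : nat) : R := sumR (n p) (fun i => len (Jb p i)).

Definition longest (p : nat) : nat := argmax (fun i => len (Jb p i)) (seq 0 (n p)).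

Definition nonempty_groups : list nat := filter (fun p => Nat.ltb 0 (n p)) (seq 0 m).

Lemma in_nonempty_groups p : In p nonempty_groups <-> (p < m)%nat /\ (0 < n p)%nat.
Proof.
  unfold nonempty_groups. rewrite filter_In, in_seq, Nat.ltb_lt. lia.
Qed.

Lemma longest_spec p : (0 < n p)%nat ->
  (longest p < n p)%nat /\ forall i, (i < n p)%nat -> len (Jb p i) <= len (Jb p (longest p)).
Proof.
  intros Hp.
  destruct (argmax_spec (fun i => len (Jb p i)) (seq 0 (n p))) as [Hin Hmax].
  { destruct (n p); [lia | discriminate]. }
  fold (longest p) in Hin, Hmax. apply in_seq in Hin.
  split; [lia|]. intros i Hi. apply Hmax, in_seq. lia.
Qed.

Lemma sumR_group_len : sumR m group_len = lsum group_len nonempty_groups.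
Proof.
  rewrite sumR_lsum. unfold nonempty_groups. rewrite lsum_filter_support; [reflexivity|].
  intros p _ Hp. apply Nat.ltb_ge in Hp. unfold group_len.
  replace (n p) with 0%nat by lia. reflexivity.
Qed.

Variables (nmax : nat) (x0 Rl C w R2 : R).

Hypothesis Hin : forall p i, (p < m)%nat -> (i < n p)%nat ->
  sub_interval (Jb p i) (x0, x0 + Rl).
Hypothesis Hn : forall p, (p < m)%nat -> (n p <= nmax)%nat.
Hypothesis Hsep : forall p i q j, (p < m)%nat -> (i < n p)%nat ->
  (q < m)%nat -> (j < n q)%nat -> p <> q ->
  idist (Jb p i) (Jb q j) >= Rmax R2 (C * rpow (Rmin (len (Jb p i)) (len (Jb q j))) (1 + w)).

Lemma longest_inside p : In p nonempty_groups ->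
  sub_interval (Jb p (longest p)) (x0, x0 + Rl).
Proof.
  intros Hp. apply in_nonempty_groups in Hp as [Hpm Hnp].
  apply Hin; [exact Hpm | apply longest_spec, Hnp].
Qed.

Lemma longest_separated p q : In p nonempty_groups -> In q nonempty_groups -> p <> q ->
  idist (Jb p (longest p)) (Jb q (longest q)) >=
    Rmax R2 (C * rpow (Rmin (len (Jb p (longest p))) (len (Jb q (longest q)))) (1 + w)).
Proof.
  intros Hp Hq Hpq.
  apply in_nonempty_groups in Hp as [Hpm Hnp]. apply in_nonempty_groups in Hq as [Hqm Hnq].
  apply Hsep; try apply longest_spec; assumption.
Qed.

Lemma group_len_le_longest p : In p nonempty_groups ->
  group_len p <= INR nmax * len (Jb p (longest p)).
Proof.
  intros Hp. destruct (longest_inside p Hp) as (_ & Hwf & _).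
  apply in_nonempty_groups in Hp as [Hpm Hnp].
  eapply Rle_trans; [apply sumR_le_const, longest_spec, Hnp|].
  apply Rmult_le_compat_r; [unfold len; lra | apply le_INR, Hn, Hpm].
Qed.

(* Only intervals of different groups are separated, so the other groups are
   compared with A through their longest intervals. *)
Lemma dominant_group t0 : 0 < C -> 0 < w -> 0 < R2 -> 0 < t0 -> 0 < sumR m group_len ->
  exists A, In A nonempty_groups /\
    sumR m group_len <= group_len A + INR nmax *
      (t0 * (Rl / R2) + Rl / (C * Rpower t0 w) * / (1 - / Rpower 2 w)).
Proof.
  intros HC Hw HR2 Ht0 Hpos.
  set (G := nonempty_groups) in *.
  set (rep := fun p => Jb p (longest p)).
  assert (HG : G <> []).
  { intros HG. rewrite sumR_group_len in Hpos. fold G in Hpos.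
    rewrite HG in Hpos. simpl in Hpos. lra. }
  destruct (argmax_spec (fun p => len (rep p)) G HG) as [HA Hmax].
  set (A := argmax _ G) in HA, Hmax.
  set (L := filter (fun q => negb (Nat.eqb q A)) G).
  assert (HGnd : NoDup G) by apply NoDup_filter, seq_NoDup.
  assert (HL : forall q, In q L -> In q G /\ q <> A).
  { intros q Hq. apply filter_In in Hq as [Hq Hne].
    split; [exact Hq|]. destruct (Nat.eqb_spec q A); [discriminate | assumption]. }
  assert (HAL : forall p, In p (A :: L) -> In p G)
    by (intros p [<- | Hp]; [exact HA | apply HL, Hp]).
  assert (Hfamily : lsum (fun q => len (rep q)) L <=
           t0 * (Rl / R2) + Rl / (C * Rpower t0 w) * / (1 - / Rpower 2 w)).
  { apply (dominated_family_len_sum rep A L x0 Rl C w R2); auto.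
    - apply NoDup_filter, HGnd.
    - intros HA'. destruct (HL A HA'). contradiction.
    - intros p Hp. apply longest_inside, HAL, Hp.
    - intros q Hq. apply Hmax, HL, Hq.
    - intros p q Hp Hq. apply longest_separated; apply HAL; assumption. }
  assert (Hothers : lsum group_len L <= INR nmax * lsum (fun q => len (rep q)) L).
  { rewrite <- lsum_scal. apply lsum_le. intros q Hq. apply group_len_le_longest, HL, Hq. }
  exists A. split; [exact HA|].
  rewrite sumR_group_len, (lsum_split_at _ _ A HGnd HA). fold L.
  pose proof (Rmult_le_compat_l (INR nmax) _ _ (pos_INR nmax) Hfamily).
  lra.
Qed.

End Groups.

(* [layer_base] is chosen so that [nmax * Rl / (C * t0^w * (1 - 2^-w)) = Rl / 10]
   and [separation_scale] so that [nmax * t0 * Rl / R2 <= Rl / 10]. *)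
Definition layer_base (C w : R) (nmax : nat) : R :=
  Rpower (10 * INR nmax / (C * (1 - / Rpower 2 w))) (/ w).

Definition separation_scale (C w : R) (nmax : nat) : R :=
  10 * INR nmax * layer_base C w nmax + 1.

Lemma layer_base_pos C w nmax : 0 < layer_base C w nmax.
Proof. apply exp_pos. Qed.

Lemma separation_scale_pos C w nmax : 0 < separation_scale C w nmax.
Proof.
  unfold separation_scale. pose proof (layer_base_pos C w nmax). pose proof (pos_INR nmax). nra.
Qed.

Lemma tail_bound_le C w nmax Rl : 0 < C -> 0 < w -> (0 < nmax)%nat -> 0 <= Rl ->
  let t0 := layer_base C w nmax in
  INR nmax * (t0 * (Rl / separation_scale C w nmax) +
              Rl / (C * Rpower t0 w) * / (1 - / Rpower 2 w)) <= Rl / 5.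
Proof.
  intros HC Hw Hnmax HRl t0.
  assert (Hnm : 1 <= INR nmax) by (apply (le_INR 1); lia).
  assert (Ht0 : 0 < t0) by apply layer_base_pos.
  assert (Hs : 1 < Rpower 2 w) by (rewrite <- (Rpower_O 2) by lra; apply Rpower_lt; lra).
  assert (Hs' : / Rpower 2 w < 1) by (rewrite <- Rinv_1; apply Rinv_lt_contravar; lra).
  assert (Hpow : Rpower t0 w = 10 * INR nmax / (C * (1 - / Rpower 2 w))).
  { unfold t0, layer_base. rewrite Rpower_mult, Rinv_l, Rpower_1; [reflexivity | |lra].
    apply Rdiv_lt_0_compat; [lra | apply Rmult_lt_0_compat; lra]. }
  assert (Hlevels : INR nmax * (Rl / (C * Rpower t0 w) * / (1 - / Rpower 2 w)) = Rl / 10).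
  { rewrite Hpow. field. repeat split; lra. }
  assert (Hcount : INR nmax * (t0 * (Rl / separation_scale C w nmax)) <= Rl / 10).
  { unfold separation_scale. fold t0.
    apply Rmult_le_reg_r with (10 * INR nmax * t0 + 1); [nra|].
    replace (INR nmax * (t0 * (Rl / (10 * INR nmax * t0 + 1))) * (10 * INR nmax * t0 + 1))
      with (INR nmax * t0 * Rl) by (field; nra).
    nra. }
  rewrite Rmult_plus_distr_l. lra.
Qed.

Theorem lemma5p3 :
  forall (C w : R) (nmax : nat),
    0 < C -> 0 < w -> (0 < nmax)%nat ->
    exists R2 : R, 0 < R2 /\
      forall (eps : R), 0 < eps < / 1000 ->
      forall (x0 Rl : R), R2 <= Rl ->
      forall (n0 m : nat) (n : nat -> nat)
             (J0 : nat -> interval) (Jb : nat -> nat -> interval),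
        is_partition (x0, x0 + Rl) n0 m n J0 Jb ->
        (forall p, (p < m)%nat -> (n p <= nmax)%nat) ->
        sumR m (fun p => sumR (n p) (fun i => len (Jb p i))) >= (1 - eps) * Rl ->
        (forall p i q j, (p < m)%nat -> (i < n p)%nat ->
                         (q < m)%nat -> (j < n q)%nat -> p <> q ->
           idist (Jb p i) (Jb q j) >=
             Rmax R2 (C * rpow (Rmin (len (Jb p i)) (len (Jb q j))) (1 + w))) ->
        exists j0 i0, (j0 < m)%nat /\ (i0 < n j0)%nat /\
          len (Jb j0 i0) >= / (32 * INR nmax) * Rl /\
          sumR (n j0) (fun i => len (Jb j0 i)) >= 3 / 4 * Rl.
Proof.
  intros C w nmax HC Hw Hnmax.
  pose proof (separation_scale_pos C w nmax) as HR2.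
  exists (separation_scale C w nmax). split; [exact HR2|].
  intros eps Heps x0 Rl HRl n0 m n J0 Jb Hpart Hn Hsum Hsep.
  change (sumR m (group_len n Jb) >= (1 - eps) * Rl) in Hsum.
  assert (Hin : forall p i, (p < m)%nat -> (i < n p)%nat -> sub_interval (Jb p i) (x0, x0 + Rl))
    by (intros p i Hp Hi; exact (partition_member_inside _ _ _ _ _ _ (Bad p i) Hpart (conj Hp Hi))).
  destruct (dominant_group m n Jb nmax x0 Rl C w _ Hin Hn Hsep (layer_base C w nmax)
              HC Hw HR2 (layer_base_pos C w nmax) ltac:(nra)) as (A & HA & Hdom).
  pose proof (tail_bound_le C w nmax Rl HC Hw Hnmax ltac:(lra)) as Htail. cbv zeta in Htail.
  pose proof (group_len_le_longest m n Jb nmax x0 Rl Hin Hn A HA) as Hgroup.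
  apply in_nonempty_groups in HA as [HAm HnA].
  assert (Hnm : 1 <= INR nmax) by (apply (le_INR 1); lia).
  assert (Heps_Rl : eps * Rl <= Rl / 1000) by nra.
  exists A, (longest n Jb A). split; [exact HAm | split; [apply longest_spec, HnA | split]].
  - apply Rle_ge, (Rmult_le_reg_l (INR nmax)); [lra|].
    replace (INR nmax * (/ (32 * INR nmax) * Rl)) with (Rl / 32) by (field; lra).
    lra.
  - change (group_len n Jb A >= 3 / 4 * Rl). lra.
Qed.
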